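(* Let $G_H$ be a finite undirected multigraph (parallel edges allowed, no self-loops) with vertex set $V$ and edge set partitioned as $E = S \sqcup S^c$ into secure edges $S$ and insecure edges $S^c$. (1) If $S^c \neq \emptyset$ (even if $|S^c| = 1$), then $G_H$ admits both a hidden generalized attack and a detectable generalized attack. (2) If $G_H$ admits a hidden (respectively detectable) generalized attack and $G'$ is obtained from $G_H$ by adding new secure edges between vertices of $V$, then $G'$ also admits a hidden (respectively detectable) generalized attack.
   Context: For a nonempty proper subset $U \subsetneq V$, the cut $\delta(U)$ is the set of edges with exactly one endpoint in $U$; a cut is any set of this form. A generalized attack is a triple $(C,J,I)$ where $C$ is a cut, $J \subseteq C$ is a set of jammed edges (secure or insecure), and $I \subseteq (C \cap S^c)\setminus J$ is a nonempty set of insecure edges into which data is injected. The attack is hidden if $I \cup J = C$, and detectable if $2|I| > |C\setminus J|$. *)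

From mathcomp Require Import all_boot.
Set Implicit Arguments. Unset Strict Implicit. Unset Printing Implicit Defensive.

(* A finite multigraph: vertex type V, edge type E (both finite), and an
   endpoint map [ends : E -> V * V]; parallel edges are distinct elements of E
   with the same endpoints.  The orientation of the pair is irrelevant for
   everything below (cuts are symmetric). *)
Definition loopless (V E : finType) (ends : E -> V * V) : Prop :=
  forall e : E, (ends e).1 != (ends e).2.

Definition delta (V E : finType) (ends : E -> V * V) (U : {set V}) : {set E} :=
  [set e | ((ends e).1 \in U) != ((ends e).2 \in U)].

Definition is_cut (V E : finType) (ends : E -> V * V) (C : {set E}) : Prop :=
  exists U : {set V}, [/\ U != set0, U != setT & C = delta ends U].

Definition gen_attack (V E : finType) (ends : E -> V * V) (S : {set E})
    (C J I : {set E}) : Prop :=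
  [/\ is_cut ends C, J \subset C, I \subset (C :&: ~: S) :\: J & I != set0].

Definition hidden_attack (V E : finType) (ends : E -> V * V) (S : {set E})
    (C J I : {set E}) : Prop :=
  gen_attack ends S C J I /\ I :|: J = C.

Definition detectable_attack (V E : finType) (ends : E -> V * V) (S : {set E})
    (C J I : {set E}) : Prop :=
  gen_attack ends S C J I /\ #|C :\: J| < 2 * #|I|.

Definition admits_hidden (V E : finType) (ends : E -> V * V) (S : {set E}) :=
  exists C J I : {set E}, hidden_attack ends S C J I.

Definition admits_detectable (V E : finType) (ends : E -> V * V) (S : {set E}) :=
  exists C J I : {set E}, detectable_attack ends S C J I.

From mathcomp Require Import all_boot.

Set Implicit Arguments.
Unset Strict Implicit.
Unset Printing Implicit Defensive.

(* A single insecure edge e already yields an attack: cut around one endpoint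
   of e, inject into e and jam every other edge of the cut.  The attack is
   hidden because I and J cover the cut, and detectable because the only
   unjammed edge carries injected data.  Adding secure edges f : E -> E'
   keeps the same vertex set U; the new edges of the cut delta'(U) are all
   jammed (so it does not even matter whether they are secure), hence the
   unjammed part of the cut, and with it both properties, is transported
   along f unchanged. *)

Lemma setDUK (T : finType) (A B : {set T}) : B \subset A -> A :\: B :|: B = A.
Proof.
move=> /subsetP BA; apply/setP=> x; rewrite !inE.
by case: (boolP (x \in B)) => [/BA|] //=; rewrite orbF.
Qed.

Section Cuts.

Variables (V E : finType) (ends : E -> V * V).

Lemma delta0 : delta ends set0 = set0.
Proof. by apply/setP=> e; rewrite !inE. Qed.

Lemma deltaT : delta ends setT = set0.
Proof. by apply/setP=> e; rewrite !inE. Qed.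

Lemma is_cut_delta (U : {set V}) : delta ends U != set0 -> is_cut ends (delta ends U).
Proof.
move=> nz; exists U; split=> //; apply: contraNneq nz => ->.
  exact/eqP/delta0.
exact/eqP/deltaT.
Qed.

Lemma mem_delta_end1 (e : E) :
  (ends e).1 != (ends e).2 -> e \in delta ends [set (ends e).1].
Proof. by move=> ne; rewrite !inE eqxx [_.2 == _]eq_sym (negbTE ne). Qed.

Lemma hidden_attackE (S C J I : {set E}) :
  gen_attack ends S C J I -> (I :|: J = C <-> C :\: J = I).
Proof.
move=> [_ JC IC _]; split=> [<- | <-]; last exact: setDUK.
rewrite setDUl setDv setU0; apply/setDidPl.
by move: IC; rewrite subsetD => /andP[].
Qed.

Section SingleEdge.

Variables (S C : {set E}) (e : E).
Hypotheses (cutC : is_cut ends C) (eC : e \in C) (eS : e \notin S).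

Lemma single_edge_attack : gen_attack ends S C (C :\ e) [set e].
Proof.
split=> //; first exact: subsetDl.
  by rewrite sub1set !inE eqxx eC eS.
by apply/set0Pn; exists e; rewrite inE.
Qed.

Lemma single_edge_hidden : hidden_attack ends S C (C :\ e) [set e].
Proof. by split; [exact: single_edge_attack | rewrite setD1K]. Qed.

Lemma single_edge_detectable : detectable_attack ends S C (C :\ e) [set e].
Proof.
split; first exact: single_edge_attack.
by rewrite setDDr setDv set0U (setIidPr _) ?sub1set // cards1.
Qed.

End SingleEdge.

Lemma insecure_edge_attacks (S : {set E}) :
  loopless ends -> ~: S != set0 -> admits_hidden ends S /\ admits_detectable ends S.
Proof.
move=> noloop /set0Pn[e]; rewrite inE => eS.
have eC := mem_delta_end1 (noloop e).
have cutC : is_cut ends (delta ends [set (ends e).1]).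
  by apply: is_cut_delta; apply/set0Pn; exists e.
split; do 3 eexists.
  exact: (single_edge_hidden cutC eC eS).
exact: (single_edge_detectable cutC eC eS).
Qed.

End Cuts.

Section SecureExtension.

Variables (V E E' : finType) (ends : E -> V * V) (ends' : E' -> V * V).
Variables (S : {set E}) (S' : {set E'}) (f : E -> E').
Hypotheses (f_inj : injective f) (f_ends : forall e, ends' (f e) = ends e).
Hypotheses (f_secure : forall e, (f e \in S') = (e \in S)).

Lemma mem_delta_f (U : {set V}) (e : E) :
  (f e \in delta ends' U) = (e \in delta ends U).
Proof. by rewrite !inE f_ends. Qed.

Lemma imset_delta_f (U : {set V}) (A : {set E}) :
  A \subset delta ends U -> f @: A \subset delta ends' U.
Proof.
by move=> /subsetP AU; apply/subsetP=> _ /imsetP[e /AU eU ->]; rewrite mem_delta_f.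
Qed.

Definition lift_jam (U : {set V}) (J : {set E}) : {set E'} :=
  delta ends' U :\: f @: (delta ends U :\: J).

Lemma lift_unjammed (U : {set V}) (J : {set E}) :
  delta ends' U :\: lift_jam U J = f @: (delta ends U :\: J).
Proof.
rewrite setDDr setDv set0U; apply/setIidPr/imset_delta_f/subsetDl.
Qed.

Lemma lift_gen_attack (C J I : {set E}) :
  gen_attack ends S C J I ->
  exists U, gen_attack ends' S' (delta ends' U) (lift_jam U J) (f @: I) /\
            delta ends' U :\: lift_jam U J = f @: (C :\: J).
Proof.
move=> [[U [U0 UT defC]] JC IC I0]; subst C; exists U.
split; last exact: lift_unjammed.
split; first by exists U.
- exact: subsetDl.
- apply/subsetP=> _ /imsetP[e eI ->]; have := subsetP IC e eI.
  rewrite /lift_jam !inE f_ends f_secure mem_imset // !inE.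
  by case/and3P=> -> -> ->.
- by rewrite -card_gt0 card_imset // card_gt0.
Qed.

Lemma lift_hidden : admits_hidden ends S -> admits_hidden ends' S'.
Proof.
move=> [C [J [I [att cover]]]].
have [U [att' unjam]] := lift_gen_attack att.
exists (delta ends' U), (lift_jam U J), (f @: I); split=> //.
by apply/(hidden_attackE att'); rewrite unjam ((hidden_attackE att).1 cover).
Qed.

Lemma lift_detectable : admits_detectable ends S -> admits_detectable ends' S'.
Proof.
move=> [C [J [I [att detect]]]].
have [U [att' unjam]] := lift_gen_attack att.
exists (delta ends' U), (lift_jam U J), (f @: I); split=> //.
by rewrite unjam !card_imset.
Qed.

End SecureExtension.

Theorem theorem8 (V E : finType) (ends : E -> V * V) (S : {set E}) :
  loopless ends ->
  (~: S != set0 -> admits_hidden ends S /\ admits_detectable ends S) /\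
  (forall (E' : finType) (ends' : E' -> V * V) (S' : {set E'}) (f : E -> E'),
     loopless ends' ->
     injective f ->
     (forall e : E, ends' (f e) = ends e) ->
     (forall e : E, (f e \in S') = (e \in S)) ->
     (forall e' : E', e' \notin codom f -> e' \in S') ->
     (admits_hidden ends S -> admits_hidden ends' S') /\
     (admits_detectable ends S -> admits_detectable ends' S')).
Proof.
move=> noloop; split; first exact: insecure_edge_attacks.
move=> E' ends' S' f _ f_inj f_ends f_secure _; split.
  exact: (lift_hidden f_inj f_ends f_secure).
exact: (lift_detectable f_inj f_ends f_secure).
Qed.
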